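(* Let $F\subsetneq K$ be fields of characteristic $0$, with $F$ a proper nonempty subfield of $K$. Let $p(x)=\sum_{k=0}^{n}a_k x^k\in K[x]$ be non-constant with $a_n\neq 0$, and let $q(x)=\sum_{j=0}^{m}b_j x^j\in K[x]\setminus F[x]$ with $b_m\neq 0$. Suppose $a_n,b_m\in F$ and $b_j\notin F$ for some $j\geq 1$. Then $p\circ q\notin F[x]$ and $D_F(p\circ q)=D_F(q)$.
   Context: For sets $F\subset K$ and $p(x)=\sum_{k=0}^{n}a_kx^k\in K[x]$ with $a_n\neq 0$, the $F$ deficit $D_F(p)$ is defined as follows: if $p\in K[x]\setminus F[x]$, then $D_F(p)=n-\max\{0\le k\le n: a_k\notin F\}$; if $p\in F[x]$, then $D_F(p)=n$. Here $F[x]$ denotes the set of polynomials with all coefficients in $F$. *)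

From mathcomp Require Import all_boot all_order all_algebra.
Set Implicit Arguments. Unset Strict Implicit. Unset Printing Implicit Defensive.
Import GRing.Theory.
Local Open Scope ring_scope.

Definition deficit (K : fieldType) (F : {pred K}) (p : {poly K}) : nat :=
  if p \is a polyOver F then (size p).-1
  else ((size p).-1 - \max_(k < size p | (p`_k)%R \notin F) (k : nat))%N.

From mathcomp Require Import all_boot all_order all_algebra.
From HB Require Import structures.
From mathcomp Require Import zify.

(* Let r be the largest index with q_r \notin F; the hypotheses give 1 <= r < m = deg q.
   Split q = H + L with L = q_0 + ... + q_r X^r, so that H has all its coefficients in F.
   With n = deg p, (H + L)^n - H^n = L * \sum_i q^(n-1-i) H^i has degree t = r + m(n-1)
   and leading coefficient n q_r lead(H)^(n-1), which is not in F since n != 0 in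
   characteristic 0.  The remaining terms p_i q^i (i < n) of p o q have degree at most
   m(n-1) < t because r >= 1.  Hence the coefficients of p o q above t are those of
   lead(p) H^n, which lie in F, while the coefficient at t does not; so
   D_F(p o q) = mn - t = m - r = D_F(q). *)

Set Implicit Arguments.
Unset Strict Implicit.
Unset Printing Implicit Defensive.
Import GRing.Theory.
Local Open Scope ring_scope.

Section LastCoefNotin.
Variables (K : fieldType) (F : addrClosed K).

Lemma coef_notin_lt_size (P : {poly K}) i : P`_i \notin F -> (i < size P)%N.
Proof. by rewrite ltnNge; apply: contra => /(nth_default 0) ->; apply: rpred0. Qed.

Lemma exists_last_coef_notin (P : {poly K}) : P \isn't a polyOver F ->
  exists r, P`_r \notin F /\ forall i, (r < i)%N -> P`_i \in F.
Proof.
move=> P_notF.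
have exP : exists i, P`_i \notin F.
  have /hasP[i _ Pi_notF] : has (fun i => P`_i \notin F) (iota 0 (size P)).
    apply: contraNT P_notF => /hasPn P_F; apply/polyOverP => i.
    have [i_lt|i_ge] := ltnP i (size P); last by rewrite nth_default ?rpred0.
    by apply/negPn/P_F; rewrite mem_iota.
  by exists i.
have [r Pr_notF r_max] := ex_maxnP exP (fun i Pi => ltnW (coef_notin_lt_size Pi)).
exists r; split=> // i lt_ri; apply: contraT => /r_max.
by rewrite leqNgt lt_ri.
Qed.

Lemma deficit_last_coef_notin (P : {poly K}) r :
  P`_r \notin F -> (forall i, (r < i)%N -> P`_i \in F) ->
  deficit F P = ((size P).-1 - r)%N.
Proof.
move=> Pr_notF P_F.
have P_notF : P \isn't a polyOver F by apply: contra Pr_notF => /polyOverP.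
rewrite /deficit (negbTE P_notF); congr (_ - _)%N; apply/eqP; rewrite eqn_leq.
rewrite (leq_bigmax_cond (Ordinal (coef_notin_lt_size Pr_notF))) // andbT.
by apply/bigmax_leqP => i; apply: contraR; rewrite -ltnNge => /P_F ->.
Qed.

End LastCoefNotin.

Lemma size_poly_coef_neq0 (R : nzSemiRingType) (p : {poly R}) n :
  (size p <= n.+1)%N -> p`_n != 0 -> size p = n.+1.
Proof.
move=> le_p_n pn_neq0; apply/eqP; rewrite eqn_leq le_p_n ltnNge /=.
by apply: contra pn_neq0 => /(nth_default 0) ->.
Qed.

Lemma coef_comp_poly_high (R : nzSemiRingType) (p q : {poly R}) k :
  ((size q).-1 * (size p).-2 < k)%N ->
  (p \Po q)`_k = lead_coef p * (q ^+ (size p).-1)`_k.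
Proof.
have [->|p_neq0] := eqVneq p 0; first by rewrite comp_poly0 lead_coef0 coef0 mul0r.
rewrite comp_polyE lead_coefE (polySpred p_neq0) /= big_ord_recr /= coefD coefZ.
move=> lt_k; rewrite coef_sum big1 ?add0r // => i _.
rewrite coefZ [(q ^+ i)`_k]nth_default ?mulr0 //.
apply: leq_trans (size_poly_exp_leq q i) _; apply: leq_ltn_trans lt_k.
by rewrite leq_mul2l; have := ltn_ord i; lia.
Qed.

Section PowerOfSum.
Variables (R : idomainType) (H L : {poly R}) (n : nat).
Hypotheses (L_neq0 : L != 0) (lt_LH : (size L < size H)%N).
Hypothesis n1_neq0 : n.+1%:R != 0 :> R.

Let T : {poly R} := \sum_(i < n.+1) (H + L) ^+ (n - i) * H ^+ i.

Let H_neq0 : H != 0.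
Proof. by rewrite -size_poly_eq0 -lt0n (leq_ltn_trans _ lt_LH). Qed.

Let HL_neq0 : H + L != 0.
Proof. by rewrite -size_poly_eq0 size_polyDl // size_poly_eq0. Qed.

Let size_term i : (i <= n)%N ->
    size ((H + L) ^+ (n - i) * H ^+ i) = ((size H).-1 * n).+1.
Proof.
move=> le_in; rewrite size_mul ?expf_neq0 //.
rewrite (polySpred (expf_neq0 _ HL_neq0)) (polySpred (expf_neq0 _ H_neq0)).
by rewrite !size_exp size_polyDl // addSn addnS -mulnDr subnK.
Qed.

Let coef_T : T`_((size H).-1 * n) = lead_coef H ^+ n *+ n.+1.
Proof.
rewrite coef_sum (eq_bigr (fun=> lead_coef H ^+ n)) ?sumr_const ?card_ord // => i _.
have le_in : (i <= n)%N by rewrite -ltnS.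
rewrite -[X in _`_X]/((((size H).-1 * n).+1).-1) -(size_term le_in) -lead_coefE.
by rewrite lead_coefM !lead_coef_exp lead_coefDl // -exprD subnK.
Qed.

Let size_T : size T = ((size H).-1 * n).+1.
Proof.
apply: size_poly_coef_neq0; last first.
  by rewrite coef_T -mulr_natr mulf_neq0 ?expf_neq0 ?lead_coef_eq0.
rewrite (leq_trans (size_sum _ _ _)) //; apply/bigmax_leqP => i _.
by rewrite size_term // -ltnS.
Qed.

Let exprDn_subE : (H + L) ^+ n.+1 - H ^+ n.+1 = L * T.
Proof. by rewrite subrXX addrC addKr. Qed.

Lemma size_exprDn_sub :
  size ((H + L) ^+ n.+1 - H ^+ n.+1) = (size L + (size H).-1 * n)%N.
Proof.
rewrite exprDn_subE size_mul ?size_T ?addnS //.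
by rewrite -size_poly_eq0 size_T.
Qed.

Lemma lead_coef_exprDn_sub :
  lead_coef ((H + L) ^+ n.+1 - H ^+ n.+1) = lead_coef L * lead_coef H ^+ n *+ n.+1.
Proof.
by rewrite exprDn_subE lead_coefM [lead_coef T]lead_coefE size_T coef_T mulrnAr.
Qed.

End PowerOfSum.

Section CompositionLastCoef.
Variables (K : fieldType) (F : divringClosed K).

Lemma comp_last_coef_notin (p q : {poly K}) r :
    (1 < size p)%N -> lead_coef p \in F -> (size p).-1%:R != 0 :> K ->
    (0 < r)%N -> (r < (size q).-1)%N ->
    q`_r \notin F -> (forall i, (r < i)%N -> q`_i \in F) ->
  let t := (r + (size q).-1 * (size p).-2)%N in
  (p \Po q)`_t \notin F /\ forall i, (t < i)%N -> (p \Po q)`_i \in F.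
Proof.
move=> p_gt1 lead_pF p1_neq0 r_gt0 r_lt qr_notF q_F t.
have [n size_p] : exists n, size p = n.+2 by exists (size p).-2; lia.
rewrite size_p /= in p1_neq0 t *.
set L := take_poly r.+1 q; set H := q - L.
have qE : q = H + L by rewrite subrK.
have Lr : L`_r = q`_r by rewrite coef_take_poly ltnSn.
have size_L : size L = r.+1.
  apply: size_poly_coef_neq0 (size_take_poly _ _) _; rewrite Lr.
  by apply: contraNneq qr_notF => ->; apply: rpred0.
have L_neq0 : L != 0 by rewrite -size_poly_eq0 size_L.
have size_H : size H = size q by rewrite size_polyDl // size_polyN size_L; lia.
have H_F : H \is a polyOver F.
  apply/polyOverP => i; rewrite coefB coef_take_poly.
  by case: ltnP => [_|/q_F]; rewrite ?subrr ?subr0 ?rpred0.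
have lead_HF : lead_coef H \in F by rewrite lead_coefE (polyOverP H_F).
have lt_LH : (size L < size H)%N by rewrite size_H size_L; lia.
pose D := q ^+ n.+1 - H ^+ n.+1.
have size_D : size D = t.+1.
  by rewrite /D {1}qE size_exprDn_sub // size_L size_H.
have lead_D : lead_coef D = q`_r * (lead_coef H ^+ n *+ n.+1).
  by rewrite /D {1}qE lead_coef_exprDn_sub // lead_coefE size_L Lr mulrnAr.
have coef_pq k :
    (t <= k)%N -> (p \Po q)`_k = lead_coef p * ((H ^+ n.+1)`_k + D`_k).
  rewrite /t => le_tk; rewrite coef_comp_poly_high; last by rewrite size_p /=; lia.
  by rewrite size_p /D -coefD addrC subrK.
have HnF k : (H ^+ n.+1)`_k \in F by apply/polyOverP/rpredX.
split=> [|i lt_ti]; last first.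
  rewrite coef_pq ?(ltnW lt_ti) // [D`_i]nth_default ?size_D //.
  by rewrite addr0 rpredM.
have lead_p_neq0 : lead_coef p != 0 by rewrite lead_coef_eq0 -size_poly_eq0 size_p.
have lead_H_neq0 : lead_coef H != 0 by rewrite lead_coef_eq0 -size_poly_eq0; lia.
have coef_Dt : D`_t = lead_coef D by rewrite lead_coefE size_D.
rewrite coef_pq // coef_Dt lead_D fpredMl // rpredDl // fpredMr //.
  by rewrite rpredMn ?rpredX.
by rewrite -mulr_natr mulf_neq0 ?expf_neq0.
Qed.

End CompositionLastCoef.

Theorem theorem2 (K : fieldType) (F : {pred K})
  (charK0 : [pchar K] =i pred0)
  (subF : divring_closed F)
  (properF : exists x : K, x \notin F)
  (p q : {poly K})
  (p_nonconst : (1 < size p)%N)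
  (q_notF : q \isn't a polyOver F)
  (lead_p : lead_coef p \in F)
  (lead_q : lead_coef q \in F)
  (hj : exists j : nat, (1 <= j < size q)%N /\ q`_j \notin F) :
  (p \Po q) \isn't a polyOver F /\ deficit F (p \Po q) = deficit F q.
Proof.
pose FF : divringClosed K :=
  HB.pack_for (divringClosed K) F (GRing.isDivringClosed.Build K F subF).
have [r [qr_notF q_F]] := exists_last_coef_notin (F := FF) q_notF.
have [j [/andP[j_gt0 _] qj_notF]] := hj.
have r_gt0 : (0 < r)%N.
  by apply: leq_trans j_gt0 _; rewrite leqNgt; apply/negP => /q_F; apply/negP.
have r_lt : (r < (size q).-1)%N.
  have := coef_notin_lt_size qr_notF.
  have : r != (size q).-1 by apply: contraNneq qr_notF => ->.
  lia.
have p1_neq0 : (size p).-1%:R != 0 :> K.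
  by move/pcharf0P: charK0 => ->; lia.
have [pq_notF pq_F] :=
  comp_last_coef_notin (F := FF) p_nonconst lead_p p1_neq0 r_gt0 r_lt qr_notF q_F.
split; first by apply: contra pq_notF => /(polyOverP (S := FF)).
rewrite (deficit_last_coef_notin pq_notF pq_F) (deficit_last_coef_notin qr_notF q_F).
rewrite size_comp_poly; case: (size p) p_nonconst => [|[|n]] // _.
by rewrite /= mulSn mulnC subnDr.
Qed.
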